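(* Let $f, g \in \mathrm{Inj}(\Omega)$ and suppose $f = hh_1gh_2h^{-1}$ for some $h \in \mathrm{Sym}(\Omega)$ and $h_1, h_2 \in \mathrm{Fin}(\Omega)$. Then $f \approx_{\mathrm{fin}} g$.
   Context: $\Omega$ is a countably infinite set; maps are written on the right and composed left to right. $\mathrm{Inj}(\Omega)$ is the monoid of injective maps $\Omega\to\Omega$, $\mathrm{Sym}(\Omega)$ the permutation group, $\mathrm{Fin}(\Omega)$ the permutations moving only finitely many points. For $f\in\mathrm{Inj}(\Omega)$, a cycle of $f$ is a nonempty $\Sigma\subseteq\Omega$ such that (a) for all $\alpha\in\Omega$, $(\alpha)f\in\Sigma$ iff $\alpha\in\Sigma$, and (b) no proper nonempty subset of $\Sigma$ satisfies (a). A forward cycle is an infinite cycle $\Sigma$ with $\Sigma\setminus(\Omega)f\ne\emptyset$; an open cycle is an infinite cycle that is not forward. For $n\in\mathbb{Z}_+$, $(f)\mathrm{C}_n$ is the cardinal number of cycles of $f$ of cardinality $n$; $(f)\mathrm{C}_{\mathrm{open}}$, $(f)\mathrm{C}_{\mathrm{fwd}}$ are the numbers of open and forward cycles. $f\approx_{\mathrm{fin}}g$ means: $(f)\mathrm{C}_{\mathrm{open}}=(g)\mathrm{C}_{\mathrm{open}}$; $(f)\mathrm{C}_{\mathrm{fwd}}=(g)\mathrm{C}_{\mathrm{fwd}}$; $(f)\mathrm{C}_n\ne(g)\mathrm{C}_n$ for only finitely many $n\in\mathbb{Z}_+$; and whenever $(f)\mathrm{C}_n\ne(g)\mathrm{C}_n$,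 both are finite. *)

(* Omega is modelled as nat (a fixed countably infinite set).
   Maps are written on the right in the paper; here they are ordinary
   functions nat -> nat, and the paper's product  h h1 g h2 h^{-1}
   (left to right) becomes  fun x => hinv (h2 (g (h1 (h x)))). *)
From Stdlib Require Import List Arith.
Import ListNotations.

Definition Omega := nat.
Definition subset := Omega -> Prop.

Definition is_inj (f : Omega -> Omega) : Prop := forall x y, f x = f y -> x = y.

Definition is_sym_with_inv (h hinv : Omega -> Omega) : Prop :=
  (forall x, hinv (h x) = x) /\ (forall x, h (hinv x) = x).

Definition is_fin_perm (h : Omega -> Omega) : Prop :=
  (exists hinv, is_sym_with_inv h hinv) /\
  (exists l : list Omega, forall x, h x <> x -> In x l).

Definition f_closed (f : Omega -> Omega) (S : subset) : Prop :=
  forall a, S (f a) <-> S a.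

Definition is_cycle (f : Omega -> Omega) (S : subset) : Prop :=
  (exists a, S a) /\ f_closed f S /\
  ~ (exists T : subset,
       (forall a, T a -> S a) /\ (exists a, S a /\ ~ T a) /\
       (exists a, T a) /\ f_closed f T).

Definition has_card (S : subset) (n : nat) : Prop :=
  exists l : list Omega, NoDup l /\ length l = n /\ (forall x, S x <-> In x l).

Definition is_finite_subset (S : subset) : Prop :=
  exists l : list Omega, forall x, S x -> In x l.

Definition is_infinite_subset (S : subset) : Prop := ~ is_finite_subset S.

Definition is_fwd_cycle (f : Omega -> Omega) (S : subset) : Prop :=
  is_cycle f S /\ is_infinite_subset S /\ (exists x, S x /\ forall y, f y <> x).

Definition is_open_cycle (f : Omega -> Omega) (S : subset) : Prop :=
  is_cycle f S /\ is_infinite_subset S /\ ~ is_fwd_cycle f S.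

Definition is_n_cycle (f : Omega -> Omega) (n : nat) (S : subset) : Prop :=
  is_cycle f S /\ has_card S n.

Definition same_card (P Q : subset -> Prop) : Prop :=
  exists (F : {S | P S} -> {S | Q S}) (G : {S | Q S} -> {S | P S}),
    (forall x, G (F x) = x) /\ (forall y, F (G y) = y).

Definition finite_family (P : subset -> Prop) : Prop :=
  exists l : list subset, forall S, P S -> In S l.

Definition approx_fin (f g : Omega -> Omega) : Prop :=
  same_card (is_open_cycle f) (is_open_cycle g) /\
  same_card (is_fwd_cycle f) (is_fwd_cycle g) /\
  (exists N, forall n, N <= n -> same_card (is_n_cycle f n) (is_n_cycle g n)) /\
  (forall n, 1 <= n -> ~ same_card (is_n_cycle f n) (is_n_cycle g n) ->
     finite_family (is_n_cycle f n) /\ finite_family (is_n_cycle g n)).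

(** Conjugating by a permutation preserves the whole cycle structure, so [f] may be
    replaced by [k = g o s], where [s = h1 o h2] fixes every point outside a finite set [W].
    Cycles of [g] and [k] that miss [W] coincide, and only finitely many cycles meet [W].
    Hence the families of [n]-cycles differ only for finitely many [n], and when such a
    family is infinite, Hilbert's hotel absorbs the finite change.  An infinite cycle meeting
    [W] has a canonical point: a point of [W] outside the image, or the last point before the
    cycle enters [W], with its whole backward history outside [W].  These points are the same
    for [g] and [k], and so is the unboundedness of their backward orbits, which decides
    whether the cycle is open or forward; so they match the open (resp. forward) cycles of
    [g] meeting [W] bijectively with those of [k]. *)

From Stdlib Require Import List FinFun Arith Lia Wf_nat Classical ClassicalEpsilon
  FunctionalExtensionality PropExtensionality ProofIrrelevance.
Import ListNotations.

(** * Equipotence and Hilbert's hotel *)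

Definition equipotent {X Y : Type} (P : X -> Prop) (Q : Y -> Prop) : Prop :=
  exists (F : {x | P x} -> {y | Q y}) (G : {y | Q y} -> {x | P x}),
    (forall x, G (F x) = x) /\ (forall y, F (G y) = y).

Definition finite {X : Type} (P : X -> Prop) : Prop :=
  exists l : list X, forall x, P x -> In x l.

Lemma equipotent_of_inverse {X Y} (P : X -> Prop) (Q : Y -> Prop)
    (phi : X -> Y) (psi : Y -> X) :
  (forall x, P x -> Q (phi x)) -> (forall y, Q y -> P (psi y)) ->
  (forall x, P x -> psi (phi x) = x) -> (forall y, Q y -> phi (psi y) = y) ->
  equipotent P Q.
Proof.
  intros HPQ HQP Hpsi Hphi.
  exists (fun u => exist _ (phi (proj1_sig u)) (HPQ _ (proj2_sig u))).
  exists (fun v => exist _ (psi (proj1_sig v)) (HQP _ (proj2_sig v))).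
  split; intros [x Hx]; apply eq_sig_hprop; simpl; auto using proof_irrelevance.
Qed.

Lemma equipotent_sym {X Y} (P : X -> Prop) (Q : Y -> Prop) :
  equipotent P Q -> equipotent Q P.
Proof. intros (F & G & HGF & HFG). exists G, F; auto. Qed.

Lemma equipotent_trans {X Y Z} (P : X -> Prop) (Q : Y -> Prop) (R : Z -> Prop) :
  equipotent P Q -> equipotent Q R -> equipotent P R.
Proof.
  intros (F & G & HGF & HFG) (F' & G' & HGF' & HFG').
  exists (fun x => F' (F x)), (fun z => G (G' z)).
  split; intros; [rewrite HGF', HGF | rewrite HFG, HFG']; reflexivity.
Qed.

Lemma equipotent_ext {X} (P Q : X -> Prop) : (forall x, P x <-> Q x) -> equipotent P Q.
Proof. intros H. apply (equipotent_of_inverse P Q id id); firstorder. Qed.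

Lemma finite_union {X} (P : X -> Prop) (M : X -> Prop) :
  finite (fun x => P x /\ M x) -> finite (fun x => P x /\ ~ M x) -> finite P.
Proof.
  intros [l1 H1] [l2 H2]. exists (l1 ++ l2). intros x Px. apply in_or_app.
  destruct (classic (M x)); [left; apply H1 | right; apply H2]; auto.
Qed.

Lemma equipotent_glue {X} (P1 P2 M : X -> Prop) :
  (forall x, ~ M x -> (P1 x <-> P2 x)) ->
  equipotent (fun x => P1 x /\ M x) (fun x => P2 x /\ M x) ->
  equipotent P1 P2.
Proof.
  intros Hoff (F & G & HGF & HFG).
  set (phi := fun x => match excluded_middle_informative (P1 x /\ M x) with
                       | left h => proj1_sig (F (exist _ x h)) | right _ => x end).
  set (psi := fun y => match excluded_middle_informative (P2 y /\ M y) with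
                       | left h => proj1_sig (G (exist _ y h)) | right _ => y end).
  apply (equipotent_of_inverse P1 P2 phi psi).
  - intros x Px. unfold phi. destruct excluded_middle_informative as [h | h].
    + exact (proj1 (proj2_sig (F (exist _ x h)))).
    + apply Hoff; tauto.
  - intros y Py. unfold psi. destruct excluded_middle_informative as [h | h].
    + exact (proj1 (proj2_sig (G (exist _ y h)))).
    + apply Hoff; tauto.
  - intros x Px. unfold phi. destruct excluded_middle_informative as [h | h].
    + unfold psi. destruct excluded_middle_informative as [h' | h'].
      * rewrite (eq_sig_hprop (fun _ => proof_irrelevance _) _ (F (exist _ x h))), HGF;
          reflexivity.
      * destruct h'. exact (proj2_sig (F (exist _ x h))).
    + unfold psi. destruct excluded_middle_informative; [exfalso; tauto | reflexivity].
  - intros y Py. unfold psi. destruct excluded_middle_informative as [h | h].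
    + unfold phi. destruct excluded_middle_informative as [h' | h'].
      * rewrite (eq_sig_hprop (fun _ => proof_irrelevance _) _ (G (exist _ y h))), HFG;
          reflexivity.
      * destruct h'. exact (proj2_sig (G (exist _ y h))).
    + unfold phi. destruct excluded_middle_informative; [exfalso; tauto | reflexivity].
Qed.

Section Hotel.
Variables (X : Type) (A : X -> Prop).
Hypothesis A_infinite : ~ finite A.

Lemma infinite_fresh (l : list X) : exists x, A x /\ ~ In x l.
Proof.
  apply NNPP; intro H. apply A_infinite. exists l.
  intros x Ax. apply NNPP; intro. apply H; eauto.
Qed.

Lemma infinite_inhabited : inhabited X.
Proof. destruct (infinite_fresh []) as [x _]. exact (inhabits x). Qed.

Definition fresh (l : list X) : X := epsilon infinite_inhabited (fun x => A x /\ ~ In x l).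

Lemma fresh_spec l : A (fresh l) /\ ~ In (fresh l) l.
Proof. unfold fresh. apply epsilon_spec, infinite_fresh. Qed.

Fixpoint prefix n := match n with 0 => [] | S n => fresh (prefix n) :: prefix n end.

Definition enum n := fresh (prefix n).

Lemma enum_in n : A (enum n).
Proof. apply fresh_spec. Qed.

Lemma enum_in_prefix i j : i < j -> In (enum i) (prefix j).
Proof.
  induction j as [|j IH]; intros Hij; [lia|]. simpl.
  destruct (Nat.eq_dec i j) as [->|]; [now left | right; apply IH; lia].
Qed.

Lemma enum_inj i j : enum i = enum j -> i = j.
Proof.
  intros E. destruct (lt_eq_lt_dec i j) as [[H|H]|H]; auto; exfalso.
  - apply (proj2 (fresh_spec (prefix j))). fold (enum j). rewrite <- E. now apply enum_in_prefix.
  - apply (proj2 (fresh_spec (prefix i))). fold (enum i). rewrite E. now apply enum_in_prefix.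
Qed.

Definition enum_index (x : X) : nat := epsilon (inhabits 0) (fun i => x = enum i).

Lemma enum_index_enum i : enum_index (enum i) = i.
Proof.
  symmetry. apply enum_inj. apply (epsilon_spec (inhabits 0) (fun j => enum i = enum j)). eauto.
Qed.

Section Shift.
Variable a : X.
Hypothesis a_notin : ~ A a.

Lemma enum_neq i : enum i <> a.
Proof. intros E. apply a_notin. rewrite <- E. apply enum_in. Qed.

(** Hilbert's hotel: [a] moves into room [enum 0], every guest [enum i] into [enum (S i)]. *)
Definition shift (x : X) : X :=
  if excluded_middle_informative (x = a) then enum 0 else
  if excluded_middle_informative (exists i, x = enum i) then enum (S (enum_index x)) else x.

Definition unshift (y : X) : X :=
  if excluded_middle_informative (exists i, y = enum i) then
    match enum_index y with 0 => a | S i => enum i end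
  else y.

Lemma shift_a : shift a = enum 0.
Proof. unfold shift. destruct excluded_middle_informative; congruence. Qed.

Lemma shift_enum i : shift (enum i) = enum (S i).
Proof.
  unfold shift. destruct excluded_middle_informative as [E|_]; [now destruct (enum_neq i)|].
  destruct excluded_middle_informative as [_|N]; [now rewrite enum_index_enum | exfalso; eauto].
Qed.

Lemma unshift_enum i : unshift (enum i) = match i with 0 => a | S j => enum j end.
Proof.
  unfold unshift. destruct excluded_middle_informative as [_|N]; [|exfalso; eauto].
  now rewrite enum_index_enum.
Qed.

Lemma shift_other x : x <> a -> (forall i, x <> enum i) -> shift x = x.
Proof.
  intros Ha Hi. unfold shift.
  destruct excluded_middle_informative; [contradiction|].
  destruct excluded_middle_informative as [[i E]|]; [destruct (Hi i E) | reflexivity].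
Qed.

Lemma unshift_other y : (forall i, y <> enum i) -> unshift y = y.
Proof.
  intros Hi. unfold unshift.
  destruct excluded_middle_informative as [[i E]|]; [destruct (Hi i E) | reflexivity].
Qed.

Lemma equipotent_remove_point (P : X -> Prop) :
  (forall x, A x -> P x) -> P a -> equipotent P (fun x => P x /\ x <> a).
Proof.
  intros HAP Pa. pose proof enum_neq as Ha.
  assert (Hx : forall x, x = a \/ (exists i, x = enum i) \/ (x <> a /\ forall i, x <> enum i)).
  { intros x. destruct (classic (x = a)); [now left|].
    destruct (classic (exists i, x = enum i)); [now right; left|].
    right; right. split; auto. intros i E. eauto. }
  assert (Hy : forall y, (exists i, y = enum i) \/ (forall i, y <> enum i)).
  { intros y. destruct (classic (exists i, y = enum i)); [now left|]. right. intros i E. eauto. }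
  apply (equipotent_of_inverse _ _ shift unshift).
  - intros x Px. destruct (Hx x) as [->|[[i ->]|[Hxa Hxi]]].
    + rewrite shift_a. split; auto using enum_in.
    + rewrite shift_enum. split; auto using enum_in.
    + rewrite shift_other; auto.
  - intros y [Py Hya]. destruct (Hy y) as [[[|i] ->]|Hyi].
    + now rewrite unshift_enum.
    + rewrite unshift_enum; auto using enum_in.
    + now rewrite unshift_other.
  - intros x Px. destruct (Hx x) as [->|[[i ->]|[Hxa Hxi]]].
    + now rewrite shift_a, unshift_enum.
    + now rewrite shift_enum, unshift_enum.
    + now rewrite shift_other, unshift_other.
  - intros y [Py Hya]. destruct (Hy y) as [[[|i] ->]|Hyi].
    + now rewrite unshift_enum, shift_a.
    + now rewrite unshift_enum, shift_enum.
    + rewrite unshift_other, shift_other; auto.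
Qed.

End Shift.

Lemma equipotent_absorb (l : list X) : forall P : X -> Prop,
  (forall x, A x -> P x) -> (forall x, P x -> ~ A x -> In x l) -> equipotent P A.
Proof.
  induction l as [|a l IH]; intros P HAP Hl.
  - apply equipotent_ext. intros x; split; auto.
    intros Px. apply NNPP; intro h. apply (Hl x Px h).
  - destruct (classic (P a /\ ~ A a)) as [[Pa Ha]|Hn].
    + eapply equipotent_trans; [apply (equipotent_remove_point a Ha P HAP Pa)|].
      apply IH.
      * intros x Ax. split; auto. intros ->. auto.
      * intros x [Px Hxa] HA. destruct (Hl x Px HA); [congruence | auto].
    + apply IH; auto. intros x Px HA. destruct (Hl x Px HA) as [->|]; tauto.
Qed.

End Hotel.

Lemma equipotent_finite_change {X} (P1 P2 M : X -> Prop) :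
  (forall x, ~ M x -> (P1 x <-> P2 x)) ->
  finite (fun x => P1 x /\ M x) -> finite (fun x => P2 x /\ M x) -> ~ finite P1 ->
  equipotent P1 P2.
Proof.
  intros Hoff F1 F2 Hinf.
  set (A := fun x => P1 x /\ ~ M x).
  assert (A_infinite : ~ finite A).
  { intros FA. apply Hinf. now apply (finite_union P1 M). }
  destruct F1 as [l1 H1], F2 as [l2 H2].
  apply (equipotent_trans _ A).
  - apply (equipotent_absorb _ _ A_infinite l1); [firstorder|].
    intros x Px HA. apply H1. split; auto. apply NNPP; intro. apply HA. now split.
  - apply equipotent_sym, (equipotent_absorb _ _ A_infinite l2).
    + intros x [Px HM]. now apply Hoff.
    + intros x Px HA. apply H2. split; auto. apply NNPP; intro HM.
      apply HA. split; auto. now apply Hoff.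
Qed.

Lemma equipotent_marked (Q : subset -> Prop) (R : nat -> Prop) (c : nat -> subset) :
  (forall C, Q C -> exists x, C x /\ R x) ->
  (forall C x y, Q C -> C x -> C y -> R x -> R y -> x = y) ->
  (forall x, R x -> Q (c x) /\ c x x) ->
  (forall C x, Q C -> C x -> C = c x) ->
  equipotent Q R.
Proof.
  intros Hex Huniq Hc Hcx.
  set (mark := fun C : subset => epsilon (inhabits 0) (fun x => C x /\ R x)).
  assert (Hmark : forall C, Q C -> C (mark C) /\ R (mark C)) by (intros; now apply epsilon_spec, Hex).
  apply (equipotent_of_inverse Q R mark c).
  - intros C QC. apply Hmark, QC.
  - intros x Rx. apply Hc, Rx.
  - intros C QC. symmetry. apply Hcx, Hmark; exact QC.
  - intros x Rx. destruct (Hc x Rx) as [Qcx cxx]. destruct (Hmark _ Qcx) as [Hm Rm].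
    exact (Huniq _ _ _ Qcx Hm cxx Rm Rx).
Qed.

(** * Cycles of an injective map *)

Lemma injective_seq_avoids (u : nat -> nat) (l : list nat) :
  (forall i j, u i = u j -> i = j) -> exists N, forall i, N <= i -> ~ In (u i) l.
Proof.
  intros Hu. induction l as [|a l [N HN]].
  - exists 0; simpl; auto.
  - destruct (classic (exists i, u i = a)) as [[i Hi]|Hn].
    + exists (max N (S i)). intros j Hj [E|E].
      * subst a. apply Hu in E. lia.
      * apply (HN j); auto; lia.
    + exists N. intros j Hj [E|E]; [apply Hn; eauto | apply (HN j); auto].
Qed.

Lemma least_witness (P : nat -> Prop) j : P j -> exists i, P i /\ forall k, k < i -> ~ P k.
Proof.
  intros Pj. destruct (dec_inh_nat_subset_has_unique_least_element P (fun n => classic (P n)))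
    as [i [[Pi Hi] _]]; [eauto|].
  exists i. split; auto. intros k Hk Pk. specialize (Hi k Pk). lia.
Qed.

Section Iteration.
Variable f : nat -> nat.
Hypothesis f_inj : is_inj f.

Lemma iter_inj n x y : Nat.iter n f x = Nat.iter n f y -> x = y.
Proof. induction n; simpl; auto. Qed.

Lemma iter_cancel m n x y :
  Nat.iter m f x = Nat.iter n f y -> exists d, Nat.iter d f x = y \/ Nat.iter d f y = x.
Proof.
  intros E. destruct (le_lt_dec m n).
  - exists (n - m). right. apply (iter_inj m). rewrite <- Nat.iter_add.
    now replace (m + (n - m)) with n by lia.
  - exists (m - n). left. apply (iter_inj n). rewrite <- Nat.iter_add.
    now replace (n + (m - n)) with m by lia.
Qed.


Lemma iter_periodic p x : Nat.iter p f x = x -> forall q t, Nat.iter (q + t * p) f x = Nat.iter q f x.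
Proof.
  intros Hp q t. induction t as [|t IH]; [f_equal; lia|].
  replace (q + S t * p) with (p + (q + t * p)) by lia.
  rewrite Nat.iter_add, IH, <- Nat.iter_add.
  now replace (p + q) with (q + p) by lia; rewrite Nat.iter_add, Hp.
Qed.

Lemma iter_mod p x : 1 <= p -> Nat.iter p f x = x ->
  forall a, Nat.iter a f x = Nat.iter (a mod p) f x.
Proof.
  intros Hp Hx a. rewrite <- (iter_periodic p x Hx (a mod p) (a / p)).
  f_equal. pose proof (Nat.div_mod_eq a p). lia.
Qed.

Lemma closed_iter S : f_closed f S -> forall n x, S (Nat.iter n f x) <-> S x.
Proof.
  intros HS n; induction n as [|n IH]; intros x; [reflexivity|].
  rewrite Nat.iter_succ. split; intros H; [apply IH, HS | apply HS, IH]; exact H.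
Qed.

Definition cycle_of (a x : nat) : Prop :=
  exists m n, Nat.iter m f x = Nat.iter n f a.

Lemma cycle_of_self a : cycle_of a a.
Proof. now exists 0, 0. Qed.

Lemma cycle_of_closed a : f_closed f (cycle_of a).
Proof.
  intros x; split; intros (m & n & E).
  - exists (S m), n. now rewrite Nat.iter_succ_r.
  - exists m, (S n). now rewrite <- Nat.iter_succ_r, Nat.iter_succ, E.
Qed.

Lemma cycle_of_sub S a : f_closed f S -> S a -> forall x, cycle_of a x -> S x.
Proof.
  intros HS Sa x (m & n & E). apply (closed_iter S HS m). rewrite E. now apply closed_iter.
Qed.

Lemma cycle_of_is_cycle a : is_cycle f (cycle_of a).
Proof.
  split; [exists a; apply cycle_of_self | split; [apply cycle_of_closed|]].
  intros (T & HT & (x & Hx & HTx) & (t & Tt) & Tcl). apply HTx.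
  apply (cycle_of_sub T a Tcl); auto.
  destruct (HT t Tt) as (m & n & E). apply (closed_iter T Tcl n). rewrite <- E.
  now apply closed_iter.
Qed.

Lemma cycle_eq_cycle_of S a : is_cycle f S -> S a -> S = cycle_of a.
Proof.
  intros (_ & Scl & Smin) Sa. apply functional_extensionality; intros x.
  apply propositional_extensionality. split; [|apply cycle_of_sub; auto].
  intros Sx. apply NNPP; intro Hx. apply Smin. exists (cycle_of a). repeat split.
  - apply cycle_of_sub; auto.
  - now exists x.
  - exists a; apply cycle_of_self.
  - apply cycle_of_closed.
  - apply cycle_of_closed.
Qed.

Lemma cycle_unique S T a : is_cycle f S -> is_cycle f T -> S a -> T a -> S = T.
Proof. intros. now rewrite (cycle_eq_cycle_of S a), (cycle_eq_cycle_of T a). Qed.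

Lemma finite_cycle_periodic S x : f_closed f S -> finite S -> S x ->
  exists p, 1 <= p /\ Nat.iter p f x = x.
Proof.
  intros Scl [l Hl] Sx.
  destruct (classic (forall i j, Nat.iter i f x = Nat.iter j f x -> i = j)) as [Hinj|Hn].
  - destruct (injective_seq_avoids _ l Hinj) as [N HN]. exfalso.
    apply (HN N); auto. apply Hl, closed_iter; auto.
  - apply NNPP; intro Hp. apply Hn. intros i j E.
    destruct (lt_eq_lt_dec i j) as [[Hij|Hij]|Hij]; auto; exfalso; apply Hp.
    + exists (j - i). split; [lia|]. apply (iter_inj i). rewrite <- Nat.iter_add.
      now replace (i + (j - i)) with j by lia.
    + exists (i - j). split; [lia|]. apply (iter_inj j). rewrite <- Nat.iter_add.
      now replace (j + (i - j)) with i by lia.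
Qed.

Lemma periodic_cycle_finite x p : 1 <= p -> Nat.iter p f x = x -> finite (cycle_of x).
Proof.
  intros Hp Hx. exists (map (fun q => Nat.iter q f x) (seq 0 p)). intros y (m & n & E).
  apply in_map_iff. exists ((n + m * p - m) mod p). split.
  - apply (iter_inj m). rewrite <- Nat.iter_add, E.
    rewrite (iter_mod p x Hp Hx n), (iter_mod p x Hp Hx (m + _)), Nat.Div0.add_mod_idemp_r.
    replace (m + (n + m * p - m)) with (n + m * p) by nia. now rewrite Nat.Div0.mod_add.
  - apply in_seq. split; [lia|]. apply Nat.mod_upper_bound. lia.
Qed.

End Iteration.

Definition not_in_image (f : nat -> nat) (x : nat) : Prop := forall y, f y <> x.

Definition back_infinite (f : nat -> nat) (x : nat) : Prop :=
  forall n, exists y, Nat.iter n f y = x.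

Definition entry (f : nat -> nat) (W : list nat) (x : nat) : Prop :=
  ~ In x W /\ In (f x) W /\ forall n y, Nat.iter n f y = x -> ~ In y W.

(** Every infinite cycle meeting [W] contains exactly one such point. *)
Definition cycle_rep (f : nat -> nat) (W : list nat) (x : nat) : Prop :=
  entry f W x \/ (In x W /\ not_in_image f x).

Definition meets (W : list nat) (S : subset) : Prop := exists x, S x /\ In x W.

Section CycleKinds.
Variable f : nat -> nat.
Hypothesis f_inj : is_inj f.

Lemma back_infinite_of_no_start C x :
  is_cycle f C -> ~ (exists s, C s /\ not_in_image f s) -> C x -> back_infinite f x.
Proof.
  intros (_ & Ccl & _) Hns Cx n. revert x Cx. induction n as [|n IH]; intros x Cx.
  - now exists x.
  - assert (exists y, f y = x) as [y <-].
    { apply NNPP; intro H. apply Hns. exists x; split; auto. intros y E; apply H; eauto. }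
    destruct (IH y) as [z Hz]; [now apply Ccl|]. exists z. now rewrite Nat.iter_succ, Hz.
Qed.

Lemma cycle_from_start C s x :
  is_cycle f C -> C s -> not_in_image f s -> C x -> exists j, x = Nat.iter j f s.
Proof.
  intros Ccyc Cs Hs Cx. rewrite (cycle_eq_cycle_of f C s Ccyc Cs) in Cx.
  destruct Cx as (m & n & E). destruct (le_lt_dec m n).
  - exists (n - m). apply (iter_inj f f_inj m). rewrite <- Nat.iter_add.
    now replace (m + (n - m)) with n by lia.
  - exfalso. apply (Hs (Nat.iter (m - n - 1) f x)). apply (iter_inj f f_inj n).
    rewrite <- E, <- Nat.iter_succ, <- Nat.iter_add. f_equal. lia.
Qed.

Lemma start_not_back_infinite C s x :
  is_cycle f C -> C s -> not_in_image f s -> C x -> ~ back_infinite f x.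
Proof.
  intros Ccyc Cs Hs Cx Hx. destruct (cycle_from_start C s x Ccyc Cs Hs Cx) as [j ->].
  destruct (Hx (S j)) as [y Hy]. rewrite Nat.iter_succ_r in Hy.
  apply (Hs y). exact (iter_inj f f_inj j _ _ Hy).
Qed.

Lemma fwd_cycle_iff C x : is_cycle f C -> is_infinite_subset C -> C x ->
  (is_fwd_cycle f C <-> ~ back_infinite f x).
Proof.
  intros Ccyc Cinf Cx. split.
  - intros (_ & _ & s & Cs & Hs). exact (start_not_back_infinite C s x Ccyc Cs Hs Cx).
  - intros Hx. split; [exact Ccyc | split; [exact Cinf|]]. apply NNPP; intro Hns.
    apply Hx, (back_infinite_of_no_start C); auto.
Qed.

Lemma open_cycle_iff C x : is_cycle f C -> is_infinite_subset C -> C x ->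
  (is_open_cycle f C <-> back_infinite f x).
Proof.
  intros Ccyc Cinf Cx. unfold is_open_cycle. rewrite (fwd_cycle_iff C x); auto.
  split; [intros (_ & _ & H); now apply NNPP | tauto].
Qed.

Lemma infinite_cycle_aperiodic C x p :
  is_cycle f C -> is_infinite_subset C -> C x -> 1 <= p -> Nat.iter p f x <> x.
Proof.
  intros Ccyc Cinf Cx Hp Hx. apply Cinf. rewrite (cycle_eq_cycle_of f C x); auto.
  now apply (periodic_cycle_finite f f_inj x p).
Qed.

Variable W : list nat.

Lemma cycle_rep_iter x y d : Nat.iter d f x = y -> cycle_rep f W x -> cycle_rep f W y -> d = 0.
Proof.
  intros E Hx Hy. destruct d as [|d]; auto. exfalso.
  destruct Hy as [(HyW & _ & Hyback)|(_ & Hy)].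
  - destruct Hx as [(_ & HfxW & _)|(HxW & _)].
    + apply (Hyback d (f x)); auto. now rewrite <- Nat.iter_succ_r.
    + exact (Hyback (S d) x E HxW).
  - apply (Hy (Nat.iter d f x)). now rewrite <- Nat.iter_succ.
Qed.

Lemma cycle_rep_unique C x y :
  is_cycle f C -> C x -> C y -> cycle_rep f W x -> cycle_rep f W y -> x = y.
Proof.
  intros Ccyc Cx Cy Hx Hy. rewrite (cycle_eq_cycle_of f C x Ccyc Cx) in Cy.
  destruct Cy as (m & n & E). destruct (iter_cancel f f_inj m n y x E) as [d [Ed|Ed]].
  - now rewrite (cycle_rep_iter y x d Ed Hy Hx) in Ed.
  - now rewrite (cycle_rep_iter x y d Ed Hx Hy) in Ed.
Qed.

Lemma cycle_rep_infinite x : cycle_rep f W x -> is_infinite_subset (cycle_of f x).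
Proof.
  intros Hx Hfin.
  destruct (finite_cycle_periodic f f_inj _ x (cycle_of_closed f x) Hfin (cycle_of_self f x))
    as [p [Hp Ep]].
  pose proof (cycle_rep_iter x x p Ep Hx Hx). lia.
Qed.

Lemma cycle_rep_exists_from_start C s :
  is_cycle f C -> C s -> not_in_image f s -> meets W C -> exists x, C x /\ cycle_rep f W x.
Proof.
  intros Ccyc Cs Hs [w [Cw HwW]].
  destruct (classic (In s W)) as [HsW|HsW]; [exists s; split; [exact Cs | now right]|].
  destruct (cycle_from_start C s w Ccyc Cs Hs Cw) as [j ->].
  destruct (least_witness (fun j => In (Nat.iter j f s) W) j HwW) as [[|m] [Hm Hleast]];
    [contradiction|].
  exists (Nat.iter m f s). split; [now apply (closed_iter f C (proj1 (proj2 Ccyc)))|].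
  left. split; [apply Hleast; lia|]. split; [exact Hm|].
  intros n y E. destruct (le_lt_dec n m).
  - replace m with (n + (m - n)) in E by lia. rewrite Nat.iter_add in E.
    apply (iter_inj f f_inj n) in E. subst y. apply Hleast. lia.
  - exfalso. apply (Hs (Nat.iter (n - m - 1) f y)). apply (iter_inj f f_inj m).
    rewrite <- E, <- Nat.iter_succ, <- Nat.iter_add. f_equal. lia.
Qed.

Definition preimage (y : nat) : nat := epsilon (inhabits 0) (fun z => f z = y).

Fixpoint back_seq (w n : nat) : nat :=
  match n with 0 => w | S n => preimage (back_seq w n) end.

Section BackSeq.
Variables (C : subset) (w : nat).
Hypotheses (C_cycle : is_cycle f C) (C_infinite : is_infinite_subset C) (Cw : C w).
Hypothesis C_no_start : ~ (exists s, C s /\ not_in_image f s).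

Lemma back_seq_spec n : C (back_seq w n) /\ f (back_seq w (S n)) = back_seq w n.
Proof.
  assert (Hpre : forall x, C x -> f (preimage x) = x).
  { intros x Cx. unfold preimage. apply epsilon_spec. apply NNPP; intro H.
    apply C_no_start. exists x. split; auto. intros y E. apply H; eauto. }
  induction n as [|n [IHC IHf]]; [split; [exact Cw | now apply Hpre]|].
  assert (HC : C (back_seq w (S n))) by (apply (proj1 (proj2 C_cycle)); now rewrite IHf).
  split; [exact HC | now apply Hpre].
Qed.

Lemma back_seq_iter j n : Nat.iter n f (back_seq w (j + n)) = back_seq w j.
Proof.
  induction n as [|n IH]; [now rewrite Nat.add_0_r|].
  rewrite Nat.iter_succ_r, Nat.add_succ_r, (proj2 (back_seq_spec (j + n))). exact IH.
Qed.

Lemma back_seq_inj i j : back_seq w i = back_seq w j -> i = j.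
Proof.
  intros E. destruct (lt_eq_lt_dec i j) as [[Hij|Hij]|Hij]; auto; exfalso.
  - apply (infinite_cycle_aperiodic C (back_seq w j) (j - i)); auto; [apply back_seq_spec|lia|].
    rewrite <- E at 2. rewrite <- (back_seq_iter i (j - i)). do 2 f_equal. lia.
  - apply (infinite_cycle_aperiodic C (back_seq w i) (i - j)); auto; [apply back_seq_spec|lia|].
    rewrite E at 2. rewrite <- (back_seq_iter j (i - j)). do 2 f_equal. lia.
Qed.

(** The backward sequence from [w \in W] leaves the finite set [W] for good after a last
    index [m]; the next point is an entry. *)
Lemma cycle_rep_exists_no_start : In w W -> exists x, C x /\ cycle_rep f W x.
Proof.
  intros HwW. destruct (injective_seq_avoids (back_seq w) W back_seq_inj) as [N HN].
  destruct (least_witness (fun i => forall k, i <= k -> ~ In (back_seq w k) W) N HN)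
    as [[|m] [Hm Hleast]]; [now destruct (Hm 0)|].
  assert (HmW : In (back_seq w m) W).
  { apply NNPP; intro H. apply (Hleast m); [lia|]. intros k Hk.
    destruct (Nat.eq_dec k m) as [->|]; auto. apply Hm. lia. }
  exists (back_seq w (S m)). split; [apply back_seq_spec|]. left.
  split; [apply Hm; lia|]. split; [now rewrite (proj2 (back_seq_spec m))|].
  intros n y E. rewrite <- (back_seq_iter (S m) n) in E. apply (iter_inj f f_inj n) in E.
  subst y. apply Hm. lia.
Qed.

End BackSeq.

Lemma cycle_rep_exists C : is_cycle f C -> is_infinite_subset C -> meets W C ->
  exists x, C x /\ cycle_rep f W x.
Proof.
  intros Ccyc Cinf HCW.
  destruct (classic (exists s, C s /\ not_in_image f s)) as [[s [Cs Hs]]|Hns].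
  - exact (cycle_rep_exists_from_start C s Ccyc Cs Hs HCW).
  - destruct HCW as [w [Cw HwW]]. exact (cycle_rep_exists_no_start C w Ccyc Cinf Cw Hns HwW).
Qed.

End CycleKinds.

(** * Perturbation inside a finite set *)

Definition perturbed_within (W : list nat) (g k : nat -> nat) : Prop :=
  exists s, (forall x, k x = g (s x)) /\ (forall x, ~ In x W -> s x = x) /\
            (forall x, In x W -> In (s x) W).

Section Perturbation.
Variables (W : list nat) (g k : nat -> nat).
Hypothesis gk : perturbed_within W g k.

Lemma closed_perturbed C : ~ meets W C -> f_closed g C -> f_closed k C.
Proof.
  destruct gk as (s & Hk & Hout & Hin). intros HCW Ccl a. rewrite Hk.
  destruct (classic (In a W)) as [HaW|HaW]; [|now rewrite Hout].
  split; intros Ca; exfalso; apply HCW.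
  - exists (s a). split; [now apply Ccl | now apply Hin].
  - now exists a.
Qed.

Lemma not_in_image_perturbed x : not_in_image g x -> not_in_image k x.
Proof. destruct gk as (s & Hk & _). intros Hx y E. apply (Hx (s y)). now rewrite <- Hk. Qed.

Lemma iter_perturbed_outside x : (forall n y, Nat.iter n g y = x -> ~ In y W) ->
  forall n y, Nat.iter n k y = x -> Nat.iter n g y = x.
Proof.
  destruct gk as (s & Hk & Hout & Hin). intros Hback n.
  induction n as [|n IH]; intros y E; [exact E|].
  rewrite Nat.iter_succ_r in *. apply IH in E.
  destruct (classic (In y W)) as [HyW|HyW].
  - exfalso. apply (Hback (S n) (s y)); [|now apply Hin]. now rewrite Nat.iter_succ_r, <- Hk.
  - now rewrite Hk, Hout in E.
Qed.

Lemma entry_perturbed x : entry g W x -> entry k W x.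
Proof.
  intros (HxW & HfxW & Hback). split; [exact HxW|]. split.
  - destruct gk as (s & Hk & Hout & _). now rewrite Hk, Hout.
  - intros n y E. exact (Hback n y (iter_perturbed_outside x Hback n y E)).
Qed.

Lemma cycle_rep_perturbed x : cycle_rep g W x -> cycle_rep k W x.
Proof.
  intros [Hx|[HxW Hx]]; [left; now apply entry_perturbed|].
  right. split; [exact HxW | now apply not_in_image_perturbed].
Qed.

Lemma back_infinite_perturbed_entry x : entry g W x -> back_infinite k x -> back_infinite g x.
Proof.
  intros (_ & _ & Hback) Hx n. destruct (Hx n) as [y E].
  exists y. exact (iter_perturbed_outside x Hback n y E).
Qed.

End Perturbation.

Section TwoWay.
Variables (W : list nat) (g k : nat -> nat).
Hypotheses (gk : perturbed_within W g k) (kg : perturbed_within W k g).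

Lemma cycle_perturbed C : ~ meets W C -> is_cycle g C -> is_cycle k C.
Proof.
  intros HCW (Cne & Ccl & Cmin). split; [exact Cne|]. split; [now apply (closed_perturbed W g k)|].
  intros (T & HTC & HCT & Tne & Tcl). apply Cmin. exists T.
  split; [exact HTC | split; [exact HCT | split; [exact Tne|]]].
  apply (closed_perturbed W k g); auto. intros (x & Tx & HxW). apply HCW. exists x; auto.
Qed.

Lemma fwd_cycle_perturbed C : ~ meets W C -> is_fwd_cycle g C -> is_fwd_cycle k C.
Proof.
  intros HCW (Ccyc & Cinf & x & Cx & Hx). split; [now apply cycle_perturbed|].
  split; [exact Cinf|]. exists x. split; [exact Cx | exact (not_in_image_perturbed W g k gk x Hx)].
Qed.

Lemma n_cycle_perturbed n C : ~ meets W C -> is_n_cycle g n C -> is_n_cycle k n C.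
Proof. intros HCW [Ccyc HCn]. split; [now apply cycle_perturbed | exact HCn]. Qed.

Lemma cycle_rep_back_infinite_perturbed x :
  cycle_rep g W x -> (back_infinite g x <-> back_infinite k x).
Proof.
  intros [Hx|[_ Hx]].
  - split; [|exact (back_infinite_perturbed_entry W g k gk x Hx)].
    exact (back_infinite_perturbed_entry W k g kg x (entry_perturbed W g k gk x Hx)).
  - split; intros Hb; destruct (Hb 1) as [y Ey].
    + destruct (Hx y Ey).
    + destruct (not_in_image_perturbed W g k gk x Hx y Ey).
Qed.

End TwoWay.

Lemma open_cycle_perturbed W g k : perturbed_within W g k -> perturbed_within W k g ->
  forall C, ~ meets W C -> is_open_cycle g C -> is_open_cycle k C.
Proof.
  intros gk kg C HCW (Ccyc & Cinf & Cnf). split; [now apply (cycle_perturbed W g k)|].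
  split; [exact Cinf|]. intros Cf. apply Cnf. now apply (fwd_cycle_perturbed W k g).
Qed.

Lemma cycle_rep_meets f W x : cycle_rep f W x -> meets W (cycle_of f x).
Proof.
  intros [(_ & HfxW & _)|(HxW & _)].
  - exists (f x). split; [apply cycle_of_closed, cycle_of_self | exact HfxW].
  - exists x. split; [apply cycle_of_self | exact HxW].
Qed.

Lemma equipotent_cycles_reps f W (Q : subset -> Prop) (B : nat -> Prop) : is_inj f ->
  (forall C, Q C -> is_cycle f C /\ is_infinite_subset C) ->
  (forall C x, is_cycle f C -> is_infinite_subset C -> C x -> (Q C <-> B x)) ->
  equipotent (fun C => Q C /\ meets W C) (fun x => cycle_rep f W x /\ B x).
Proof.
  intros f_inj HQ HQB. apply (equipotent_marked _ _ (cycle_of f)).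
  - intros C [QC HCW]. destruct (HQ C QC) as [Ccyc Cinf].
    destruct (cycle_rep_exists f f_inj W C Ccyc Cinf HCW) as [x [Cx Hx]].
    exists x. split; [exact Cx|]. split; [exact Hx | now apply (HQB C)].
  - intros C x y [QC _] Cx Cy [Hx _] [Hy _]. destruct (HQ C QC) as [Ccyc _].
    exact (cycle_rep_unique f f_inj W C x y Ccyc Cx Cy Hx Hy).
  - intros x [Hx Bx]. split; [|apply cycle_of_self]. split; [|now apply cycle_rep_meets].
    apply (HQB _ x (cycle_of_is_cycle f x) (cycle_rep_infinite f f_inj W x Hx) (cycle_of_self f x)).
    exact Bx.
  - intros C x [QC _] Cx. exact (cycle_eq_cycle_of f C x (proj1 (HQ C QC)) Cx).
Qed.

Lemma finite_cycles_meeting f W : finite (fun C => is_cycle f C /\ meets W C).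
Proof.
  induction W as [|a W [l Hl]].
  - exists []. intros C (_ & x & _ & []).
  - destruct (classic (exists C0, is_cycle f C0 /\ C0 a)) as [[C0 [C0cyc C0a]]|Hn].
    + exists (C0 :: l). intros C (Ccyc & x & Cx & [<-|HxW]).
      * left. exact (cycle_unique f C0 C a C0cyc Ccyc C0a Cx).
      * right. apply Hl. split; [exact Ccyc|]. now exists x.
    + exists l. intros C (Ccyc & x & Cx & [<-|HxW]).
      * exfalso. apply Hn. eauto.
      * apply Hl. split; [exact Ccyc|]. now exists x.
Qed.

Lemma has_card_unique S n m : has_card S n -> has_card S m -> n = m.
Proof.
  intros (l1 & Hl1 & <- & H1) (l2 & Hl2 & <- & H2).
  apply Nat.le_antisymm; apply NoDup_incl_length; auto; intros x Hx.
  - now apply H2, H1.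
  - now apply H1, H2.
Qed.

Lemma finite_family_card_bound (l : list subset) :
  exists N, forall n S, In S l -> has_card S n -> n < N.
Proof.
  induction l as [|S0 l [N HN]]; [exists 0; intros n S []|].
  destruct (classic (exists n0, has_card S0 n0)) as [[n0 H0]|Hn].
  - exists (max N (S n0)). intros n S [<-|HS] HSn.
    + rewrite (has_card_unique _ _ _ HSn H0). lia.
    + specialize (HN n S HS HSn). lia.
  - exists N. intros n S [<-|HS] HSn; [exfalso; eauto | eauto].
Qed.

Lemma n_cycles_meeting_bound f W : exists N, forall n C, is_n_cycle f n C -> meets W C -> n < N.
Proof.
  destruct (finite_cycles_meeting f W) as [l Hl].
  destruct (finite_family_card_bound l) as [N HN].
  exists N. intros n C [Ccyc HCn] HCW. apply (HN n C); auto.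
Qed.

Lemma open_cycles_reps f W : is_inj f ->
  equipotent (fun C => is_open_cycle f C /\ meets W C) (fun x => cycle_rep f W x /\ back_infinite f x).
Proof.
  intros f_inj. apply equipotent_cycles_reps; [exact f_inj | |exact (open_cycle_iff f f_inj)].
  intros C (Ccyc & Cinf & _). now split.
Qed.

Lemma fwd_cycles_reps f W : is_inj f ->
  equipotent (fun C => is_fwd_cycle f C /\ meets W C) (fun x => cycle_rep f W x /\ ~ back_infinite f x).
Proof.
  intros f_inj. apply equipotent_cycles_reps; [exact f_inj | |exact (fwd_cycle_iff f f_inj)].
  intros C (Ccyc & Cinf & _). now split.
Qed.

Section Perturbed.
Variables (W : list nat) (g k : nat -> nat).
Hypotheses (g_inj : is_inj g) (k_inj : is_inj k).
Hypotheses (gk : perturbed_within W g k) (kg : perturbed_within W k g).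

Lemma cycle_rep_perturbed_iff x : cycle_rep k W x <-> cycle_rep g W x.
Proof. split; [apply (cycle_rep_perturbed W k g kg) | apply (cycle_rep_perturbed W g k gk)]. Qed.

Lemma open_cycles_perturbed : equipotent (is_open_cycle k) (is_open_cycle g).
Proof.
  apply (equipotent_glue _ _ (meets W)).
  - split; [apply (open_cycle_perturbed W k g) | apply (open_cycle_perturbed W g k)]; auto.
  - apply (equipotent_trans _ _ _ (open_cycles_reps k W k_inj)).
    apply (fun H => equipotent_trans _ _ _ H (equipotent_sym _ _ (open_cycles_reps g W g_inj))).
    apply equipotent_ext. intros x. rewrite cycle_rep_perturbed_iff.
    pose proof (cycle_rep_back_infinite_perturbed W g k gk kg x). tauto.
Qed.

Lemma fwd_cycles_perturbed : equipotent (is_fwd_cycle k) (is_fwd_cycle g).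
Proof.
  apply (equipotent_glue _ _ (meets W)).
  - split; [apply (fwd_cycle_perturbed W k g) | apply (fwd_cycle_perturbed W g k)]; auto.
  - apply (equipotent_trans _ _ _ (fwd_cycles_reps k W k_inj)).
    apply (fun H => equipotent_trans _ _ _ H (equipotent_sym _ _ (fwd_cycles_reps g W g_inj))).
    apply equipotent_ext. intros x. rewrite cycle_rep_perturbed_iff.
    pose proof (cycle_rep_back_infinite_perturbed W g k gk kg x). tauto.
Qed.

Lemma n_cycle_perturbed_iff n C : ~ meets W C -> (is_n_cycle k n C <-> is_n_cycle g n C).
Proof. split; [apply (n_cycle_perturbed W k g) | apply (n_cycle_perturbed W g k)]; auto. Qed.

Lemma n_cycles_perturbed_eventually :
  exists N, forall n, N <= n -> equipotent (is_n_cycle k n) (is_n_cycle g n).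
Proof.
  destruct (n_cycles_meeting_bound k W) as [Nk HNk], (n_cycles_meeting_bound g W) as [Ng HNg].
  exists (max Nk Ng). intros n Hn.
  apply (equipotent_glue _ _ (meets W)); [apply n_cycle_perturbed_iff|].
  apply equipotent_ext. intros C. split; intros [HC HCW].
  - specialize (HNk n C HC HCW). lia.
  - specialize (HNg n C HC HCW). lia.
Qed.

Lemma n_cycles_perturbed_finite n :
  ~ equipotent (is_n_cycle k n) (is_n_cycle g n) ->
  finite (is_n_cycle k n) /\ finite (is_n_cycle g n).
Proof.
  intros Hne.
  assert (Hmeet : forall f, finite (fun C => is_n_cycle f n C /\ meets W C)).
  { intros f. destruct (finite_cycles_meeting f W) as [l Hl].
    exists l. intros C [[Ccyc _] HCW]. now apply Hl. }
  split; apply NNPP; intros Hinf; apply Hne.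
  - apply (equipotent_finite_change _ _ (meets W)); auto using n_cycle_perturbed_iff.
  - apply equipotent_sym, (equipotent_finite_change _ _ (meets W)); auto.
    intros C HCW. symmetry. now apply n_cycle_perturbed_iff.
Qed.

Theorem approx_fin_perturbed : approx_fin k g.
Proof.
  split; [exact open_cycles_perturbed|].
  split; [exact fwd_cycles_perturbed|].
  split; [exact n_cycles_perturbed_eventually|].
  intros n _. exact (n_cycles_perturbed_finite n).
Qed.

End Perturbed.

Lemma perturbed_within_perm W g s si :
  (forall x, si (s x) = x) -> (forall y, s (si y) = y) -> (forall x, ~ In x W -> s x = x) ->
  perturbed_within W g (fun x => g (s x)) /\ perturbed_within W (fun x => g (s x)) g.
Proof.
  intros Hsis Hssi Hs.
  assert (Hsi : forall x, ~ In x W -> si x = x).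
  { intros x HxW. rewrite <- (Hs x HxW) at 1. apply Hsis. }
  assert (into : forall t ti, (forall x, ti (t x) = x) -> (forall x, ~ In x W -> t x = x) ->
            forall x, In x W -> In (t x) W).
  { intros t ti Ht Hfix x HxW. apply NNPP; intros HtxW.
    rewrite <- (Ht x), <- (Hfix _ HtxW), Ht in HxW. contradiction. }
  split.
  - exists s. split; [reflexivity|]. split; [exact Hs|]. exact (into s si Hsis Hs).
  - exists si. split; [intros x; now rewrite Hssi|]. split; [exact Hsi|].
    exact (into si s Hssi Hsi).
Qed.

(** * Conjugation *)

(** A set [S] is transported along [H] as [fun y => S (Hi y)]. *)
Definition conjugate_by (f k H Hi : nat -> nat) : Prop :=
  (forall x, Hi (H x) = x) /\ (forall y, H (Hi y) = y) /\ (forall x, H (f x) = k (H x)).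

Lemma conjugate_by_sym f k H Hi : conjugate_by f k H Hi -> conjugate_by k f Hi H.
Proof.
  intros (HiH & HHi & Hfk). split; [exact HHi|]. split; [exact HiH|].
  intros y. rewrite <- (HHi y) at 1. now rewrite <- Hfk, HiH.
Qed.

Lemma transport_back (S : subset) (H Hi : nat -> nat) : (forall x, Hi (H x) = x) ->
  (fun x => S (Hi (H x))) = S.
Proof. intros HiH. apply functional_extensionality; intros x. now rewrite HiH. Qed.

Section Conjugate.
Variables (f k H Hi : nat -> nat).
Hypothesis fk : conjugate_by f k H Hi.

Lemma closed_conjugate S : f_closed f S -> f_closed k (fun y => S (Hi y)).
Proof.
  destruct fk as (HiH & HHi & Hfk). intros Scl y. simpl.
  rewrite <- (HHi y) at 1. rewrite <- Hfk, HiH. apply Scl.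
Qed.

Lemma has_card_conjugate S n : has_card S n -> has_card (fun y => S (Hi y)) n.
Proof.
  destruct fk as (HiH & HHi & _). intros (l & Hl & Hlen & HS). exists (map H l).
  split; [|split].
  - apply Injective_map_NoDup; [|exact Hl]. intros x y E. now rewrite <- (HiH x), E, HiH.
  - now rewrite length_map.
  - intros y. rewrite HS, in_map_iff. split.
    + intros Hy. now exists (Hi y).
    + intros [x [<- Hx]]. now rewrite HiH.
Qed.

Lemma infinite_conjugate S : is_infinite_subset S -> is_infinite_subset (fun y => S (Hi y)).
Proof.
  destruct fk as (HiH & _). intros Sinf [l Hl]. apply Sinf. exists (map Hi l).
  intros x Sx. apply in_map_iff. exists (H x). split; [exact (HiH x)|]. apply Hl. now rewrite HiH.
Qed.

Lemma not_in_image_conjugate x : not_in_image f x -> not_in_image k (H x).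
Proof.
  destruct fk as (HiH & HHi & Hfk). intros Hx y E. apply (Hx (Hi y)).
  rewrite <- (HiH (f (Hi y))), Hfk, HHi, E. apply HiH.
Qed.

End Conjugate.

Lemma cycle_conjugate f k H Hi S : conjugate_by f k H Hi ->
  is_cycle f S -> is_cycle k (fun y => S (Hi y)).
Proof.
  intros fk (Sne & Scl & Smin). pose proof fk as (HiH & HHi & _).
  split; [destruct Sne as [x Sx]; exists (H x); now rewrite HiH|].
  split; [now apply (closed_conjugate f k H Hi)|].
  intros (T & HTS & (y & Sy & HTy) & (t & Tt) & Tcl). apply Smin.
  exists (fun x => T (H x)). split; [|split; [|split]].
  - intros x Tx. specialize (HTS _ Tx). now rewrite HiH in HTS.
  - exists (Hi y). now rewrite HHi.
  - exists (Hi t). now rewrite HHi.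
  - apply (closed_conjugate k f Hi H); [now apply conjugate_by_sym | exact Tcl].
Qed.

Lemma fwd_cycle_conjugate f k H Hi S : conjugate_by f k H Hi ->
  is_fwd_cycle f S -> is_fwd_cycle k (fun y => S (Hi y)).
Proof.
  intros fk (Scyc & Sinf & x & Sx & Hx). pose proof fk as (HiH & _).
  split; [now apply (cycle_conjugate f k H Hi)|].
  split; [now apply (infinite_conjugate f k H Hi)|].
  exists (H x). rewrite HiH. split; [exact Sx|]. exact (not_in_image_conjugate f k H Hi fk x Hx).
Qed.

Lemma open_cycle_conjugate f k H Hi S : conjugate_by f k H Hi ->
  is_open_cycle f S -> is_open_cycle k (fun y => S (Hi y)).
Proof.
  intros fk (Scyc & Sinf & Snf). pose proof fk as (HiH & _).
  split; [now apply (cycle_conjugate f k H Hi)|].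
  split; [now apply (infinite_conjugate f k H Hi)|].
  intros Hfwd. apply Snf. apply (fwd_cycle_conjugate k f Hi H) in Hfwd; [|now apply conjugate_by_sym].
  now rewrite transport_back in Hfwd.
Qed.

Lemma n_cycle_conjugate n f k H Hi S : conjugate_by f k H Hi ->
  is_n_cycle f n S -> is_n_cycle k n (fun y => S (Hi y)).
Proof.
  intros fk [Scyc Sn]. split; [now apply (cycle_conjugate f k H Hi) | now apply (has_card_conjugate f k H Hi)].
Qed.

Lemma equipotent_conjugate (Q : (nat -> nat) -> subset -> Prop) f k H Hi :
  (forall f k H Hi S, conjugate_by f k H Hi -> Q f S -> Q k (fun y => S (Hi y))) ->
  conjugate_by f k H Hi -> equipotent (Q f) (Q k) /\ (finite (Q k) -> finite (Q f)).
Proof.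
  intros HQ fk. pose proof fk as (HiH & HHi & _). pose proof (conjugate_by_sym _ _ _ _ fk) as kf.
  split.
  - apply (equipotent_of_inverse _ _ (fun S y => S (Hi y)) (fun T x => T (H x))).
    + intros S QS. now apply (HQ f k H Hi).
    + intros T QT. now apply (HQ k f Hi H).
    + intros S _. now apply transport_back.
    + intros T _. now apply transport_back.
  - intros [l Hl]. exists (map (fun T x => T (H x)) l). intros S QS. apply in_map_iff.
    exists (fun y => S (Hi y)). split; [now apply transport_back|]. apply Hl. now apply (HQ f k H Hi).
Qed.

Lemma approx_fin_conjugate f k g H Hi :
  conjugate_by f k H Hi -> approx_fin k g -> approx_fin f g.
Proof.
  intros fk (Hopen & Hfwd & (N & HN) & Hfin).
  destruct (equipotent_conjugate is_open_cycle f k H Hi open_cycle_conjugate fk) as [Eopen _].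
  destruct (equipotent_conjugate is_fwd_cycle f k H Hi fwd_cycle_conjugate fk) as [Efwd _].
  pose proof (fun n => equipotent_conjugate (fun f => is_n_cycle f n) f k H Hi
                         (n_cycle_conjugate n) fk) as En.
  split; [exact (equipotent_trans _ _ _ Eopen Hopen)|].
  split; [exact (equipotent_trans _ _ _ Efwd Hfwd)|].
  split; [exists N; intros n Hn; exact (equipotent_trans _ _ _ (proj1 (En n)) (HN n Hn))|].
  intros n Hn Hne. destruct (En n) as [Ekn Hkn].
  destruct (Hfin n Hn) as [Fk Fg]; [intros E; exact (Hne (equipotent_trans _ _ _ Ekn E))|].
  split; [exact (Hkn Fk) | exact Fg].
Qed.

Theorem mainTheorem8 (f g h hinv h1 h2 : Omega -> Omega) :
  is_inj f -> is_inj g ->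
  is_sym_with_inv h hinv -> is_fin_perm h1 -> is_fin_perm h2 ->
  (forall x, f x = hinv (h2 (g (h1 (h x))))) ->
  approx_fin f g.
Proof.
  intros f_inj g_inj [hinvh hhinv] [[h1i [h1ih h1h1i]] [l1 Hl1]] [[h2i [h2ih h2h2i]] [l2 Hl2]] Hf.
  set (s := fun x => h1 (h2 x)). set (si := fun x => h2i (h1i x)).
  assert (si_s : forall x, si (s x) = x) by (intros x; unfold s, si; now rewrite h1ih, h2ih).
  assert (s_si : forall y, s (si y) = y) by (intros y; unfold s, si; now rewrite h2h2i, h1h1i).
  assert (s_fix : forall x, ~ In x (l1 ++ l2) -> s x = x).
  { intros x Hx. unfold s. rewrite in_app_iff in Hx.
    destruct (classic (h2 x = x)) as [->|]; [|exfalso; auto].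
    apply NNPP; intros H1. apply Hx. left. now apply Hl1. }
  apply (approx_fin_conjugate f (fun x => g (s x)) g (fun x => h2i (h x)) (fun y => hinv (h2 y))).
  - split; [intros x; now rewrite h2h2i, hinvh|].
    split; [intros y; now rewrite hhinv, h2ih|].
    intros x. unfold s. now rewrite Hf, hhinv, h2ih, h2h2i.
  - destruct (perturbed_within_perm (l1 ++ l2) g s si si_s s_si s_fix) as [gk kg].
    apply (approx_fin_perturbed (l1 ++ l2)); auto.
    intros x y E. apply g_inj in E. now rewrite <- (si_s x), E, si_s.
Qed.
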